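(* Under Assumption 1, $\lim_{\nu\to\infty}T^\nu=\frac1N\mathbf{1}_N\mathbf{1}_N^\top$, $\lim_{\nu\to\infty}A_\nu=A_\infty$, and $\lim_{\nu\to\infty}F_\nu(x)=F_\infty(x)$ uniformly in $x\in\mathcal{X}$. Moreover the operators $F_\nu$ are bounded on $\mathcal{X}$, uniformly in $\nu$.
   Context: Let $N,n,m$ be positive integers; for $i\in\{1,\dots,N\}$, $\mathcal{X}^i\subset\mathbb{R}^n$ is convex, compact with non-empty interior; $\mathcal{X}=\mathcal{X}^1\times\dots\times\mathcal{X}^N$, $x=[x^1;\dots;x^N]$. Costs $J^i(z_1,z_2):\mathcal{X}^i\times\mathrm{conv}(\mathcal{X}^1,\dots,\mathcal{X}^N)\to\mathbb{R}$ are continuously differentiable in $(z_1,z_2)$, with $x^i\mapsto J^i(x^i,\frac1N\sum_jx^j)$ convex for each fixed $x^{-i}$. $\hat A\in\mathbb{R}^{m\times n}$. $T\in[0,1]^{N\times N}$. Define $\sigma_\infty(x)=\frac1N\sum_jx^j$, $\sigma^i_\nu(x)=\sum_j[T^\nu]_{ij}x^j$, $A_\nu=T^\nu\otimes\hat A$, $A_\infty=\frac1N\mathbf{1}_N\mathbf{1}_N^\top\otimes\hat A$, $F_\infty(x)=[\nabla_{z_1}J^i(x^i,\sigma_\infty(x))+\frac1N\nabla_{z_2}J^i(x^i,\sigma_\infty(x))]_{i=1}^N$, $F_\nu(x)=[\nabla_{z_1}J^i(x^i,\sigma^i_\nu(x))+[T^\nu]_{ii}\nabla_{z_2}J^i(x^i,\sigma^i_\nu(x))]_{i=1}^N$.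 Assumption 1: $T$ is primitive (some power has all entries positive) and doubly stochastic. *)

From HB Require Import structures.
From mathcomp Require Import all_boot all_order all_algebra.
From mathcomp Require Import all_classical all_reals all_analysis.
From mathcomp Require Import mxtens.
Set Implicit Arguments. Unset Strict Implicit. Unset Printing Implicit Defensive.
Import Order.TTheory GRing.Theory Num.Theory.
Import numFieldNormedType.Exports.
Local Open Scope classical_set_scope.
Local Open Scope ring_scope.

Section Defs.
Variable R : realType.

Definition convhull (n : nat) (S : set 'rV[R]_n) : set 'rV[R]_n :=
  [set y | exists (k : nat) (w : 'I_k -> R) (p : 'I_k -> 'rV[R]_n),
     [/\ (forall j, 0 <= w j), \sum_(j < k) w j = 1,
         (forall j, S (p j)) & y = \sum_(j < k) w j *: p j]].

Definition convU (N n : nat) (X : 'I_N -> set 'rV[R]_n) : set 'rV[R]_n :=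
  convhull (\bigcup_(i in [set: 'I_N]) X i).

Definition grad1 (n : nat) (J : 'rV[R]_n -> 'rV[R]_n -> R) (z1 z2 : 'rV[R]_n)
  : 'rV[R]_n := \row_k ('D_(delta_mx 0 k) (fun w => J w z2) z1).
Definition grad2 (n : nat) (J : 'rV[R]_n -> 'rV[R]_n -> R) (z1 z2 : 'rV[R]_n)
  : 'rV[R]_n := \row_k ('D_(delta_mx 0 k) (fun w => J z1 w) z2).

Definition C1_on (n : nat) (J : 'rV[R]_n -> 'rV[R]_n -> R)
  (D : set ('rV[R]_n * 'rV[R]_n)) : Prop :=
  (forall p, D p -> differentiable (fun q : 'rV[R]_n * 'rV[R]_n => J q.1 q.2) p)
  /\ {within D, continuous (fun q : 'rV[R]_n * 'rV[R]_n => grad1 J q.1 q.2)}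
  /\ {within D, continuous (fun q : 'rV[R]_n * 'rV[R]_n => grad2 J q.1 q.2)}.

(* stacked vector x = [x^1; ...; x^N] represented as 'I_N -> R^n *)
Definition inX (N n : nat) (X : 'I_N -> set 'rV[R]_n) (x : 'I_N -> 'rV[R]_n) :=
  forall i, X i (x i).

Definition sigma_inf (N n : nat) (x : 'I_N -> 'rV[R]_n) : 'rV[R]_n :=
  N%:R^-1 *: \sum_(j < N) x j.

Definition sigma_nu (N n : nat) (T : 'M[R]_N) (nu : nat) (i : 'I_N)
  (x : 'I_N -> 'rV[R]_n) : 'rV[R]_n := \sum_(j < N) (T ^+ nu) i j *: x j.

Definition F_inf (N n : nat) (J : 'I_N -> 'rV[R]_n -> 'rV[R]_n -> R)
  (x : 'I_N -> 'rV[R]_n) (i : 'I_N) : 'rV[R]_n :=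
  grad1 (J i) (x i) (sigma_inf x) + N%:R^-1 *: grad2 (J i) (x i) (sigma_inf x).

Definition F_nu (N n : nat) (J : 'I_N -> 'rV[R]_n -> 'rV[R]_n -> R)
  (T : 'M[R]_N) (nu : nat) (x : 'I_N -> 'rV[R]_n) (i : 'I_N) : 'rV[R]_n :=
  grad1 (J i) (x i) (sigma_nu T nu i x)
  + (T ^+ nu) i i *: grad2 (J i) (x i) (sigma_nu T nu i x).

Definition A_nu (N n m : nat) (T : 'M[R]_N) (Ahat : 'M[R]_(m, n)) (nu : nat)
  : 'M[R]_(N * m, N * n) := tensmx (T ^+ nu) Ahat.
Definition Jmat (N : nat) : 'M[R]_N := N%:R^-1 *: const_mx 1.
Definition A_inf (N n m : nat) (Ahat : 'M[R]_(m, n)) : 'M[R]_(N * m, N * n) :=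
  tensmx (Jmat N) Ahat.

Definition primitive (N : nat) (T : 'M[R]_N) :=
  exists k : nat, forall i j, 0 < (T ^+ k) i j.
Definition doubly_stochastic (N : nat) (T : 'M[R]_N) :=
  (forall i j, 0 <= T i j) /\ (forall i, \sum_(j < N) T i j = 1)
  /\ (forall j, \sum_(i < N) T i j = 1).

Definition upd (N n : nat) (x : 'I_N -> 'rV[R]_n) (i : 'I_N) (w : 'rV[R]_n) :=
  fun j => if j == i then w else x j.
End Defs.

(* If every entry of T^k is at least d > 0, multiplying by T^k shrinks the
   spread of each column of a stochastic matrix by the factor 1 - d, so each
   column of T^(qk) lies in a band of width (1 - d)^q; as the columns of the
   doubly stochastic T^ν sum to 1, that band contains 1/N, whence
   T^ν → 11^T/N, and A_ν = T^ν ⊗ Â follows by continuity of ⊗.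
   Every gradient argument (x^i, σ^i_ν(x)) or (x^i, σ_∞(x)) lies in the image of
   the compact set X × {weights in the simplex} under (x, w) ↦ (x^i, Σ_j w_j x^j),
   a compact subset of the domain where the partial gradients are continuous,
   hence bounded and uniformly continuous there; together with
   |σ_∞(x) - σ^i_ν(x)| ≤ ‖11^T/N - T^ν‖ Σ_j |x^j| this gives the uniform
   convergence and the uniform bound of F_ν. *)

From HB Require Import structures.
From mathcomp Require Import all_boot all_order all_algebra.
From mathcomp Require Import all_classical all_reals all_analysis.
From mathcomp Require Import mxtens.
From mathcomp Require Import ring lra zify.
Import Order.TTheory GRing.Theory Num.Theory.
Import numFieldNormedType.Exports.
Local Open Scope classical_set_scope.
Local Open Scope ring_scope.

Set Implicit Arguments.
Unset Strict Implicit.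
Unset Printing Implicit Defensive.

Section stochastic_matrix.
Variables (R : realFieldType) (N : nat).
Implicit Types (P Q B : 'M[R]_N) (a w d : R).

Definition stochastic P :=
  (forall i j, 0 <= P i j) /\ (forall i, \sum_j P i j = 1).

Definition col_band B j a w := forall i, a <= B i j <= a + w.

Lemma ler_sum_term (f : 'I_N -> R) l : (forall j, 0 <= f j) -> f l <= \sum_j f j.
Proof. by move=> f0; rewrite (bigD1 l) //= lerDl sumr_ge0. Qed.

Lemma stochastic_le1 P i j : stochastic P -> P i j <= 1.
Proof. by case=> P0 P1; rewrite -(P1 i) ler_sum_term. Qed.

Lemma stochastic1 : stochastic 1.
Proof.
split=> [i j|i]; first by rewrite mxE ler0n.
rewrite (bigD1 i) //= big1 ?addr0 => [|j ji]; rewrite mxE ?eqxx //.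
by rewrite eq_sym (negbTE ji).
Qed.

Lemma stochasticM P Q : stochastic P -> stochastic Q -> stochastic (P * Q).
Proof.
case=> P0 P1 [Q0 Q1]; split=> [i j|i]; rewrite -mulmxE.
  by rewrite mxE sumr_ge0 // => l _; rewrite mulr_ge0.
under eq_bigr do rewrite mxE.
rewrite exchange_big /= -(P1 i); apply: eq_bigr => l _.
by rewrite -mulr_sumr Q1 mulr1.
Qed.

Lemma stochasticX P k : stochastic P -> stochastic (P ^+ k).
Proof.
move=> sP; elim: k => [|k IH]; first by rewrite expr0; apply: stochastic1.
by rewrite exprS; apply: stochasticM.
Qed.

Lemma stochastic_col_band P j : stochastic P -> col_band P j 0 1.
Proof. by move=> sP i; rewrite add0r (proj1 sP) stochastic_le1. Qed.

(* Every entry of column [j] of [P * B] is a convex combination of the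
   [B l j] giving weight at least [d] to [B l0 j]. *)
Lemma col_bandM P B j (l0 : 'I_N) a w d : stochastic P -> 0 <= d ->
  (forall i l, d <= P i l) -> col_band B j a w ->
  exists a', col_band (P * B) j a' ((1 - d) * w).
Proof.
move=> [P0 P1] d0 Pd Bj; exists (a + d * (B l0 j - a)) => i.
rewrite -mulmxE mxE.
have lower : \sum_l P i l * B l j = a + \sum_l P i l * (B l j - a).
  rewrite -[X in X + _]mulr1 -(P1 i) mulr_sumr -big_split /=.
  by apply: eq_bigr => l _; ring.
have upper : \sum_l P i l * B l j = a + w - \sum_l P i l * (a + w - B l j).
  rewrite -[X in X - _]mulr1 -(P1 i) mulr_sumr -sumrB /=.
  by apply: eq_bigr => l _; ring.
have key (c : 'I_N -> R) : (forall l, 0 <= c l) -> d * c l0 <= \sum_l P i l * c l.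
  move=> c0; apply: le_trans (ler_sum_term l0 _) => [|l]; first by rewrite ler_wpM2r.
  by rewrite mulr_ge0.
have /andP[Bl0a Bl0w] := Bj l0.
have Sa : d * (B l0 j - a) <= \sum_l P i l * (B l j - a).
  by apply: key => l; rewrite subr_ge0; case/andP: (Bj l).
have Sw : d * (a + w - B l0 j) <= \sum_l P i l * (a + w - B l j).
  by apply: key => l; rewrite subr_ge0; case/andP: (Bj l).
apply/andP; split; lra.
Qed.

Lemma col_band_pow P j (l0 : 'I_N) k d : stochastic P -> 0 <= d ->
  (forall i l, d <= (P ^+ k) i l) ->
  forall q nu, (q * k <= nu)%N -> exists a, col_band (P ^+ nu) j a ((1 - d) ^+ q).
Proof.
move=> sP d0 Pd; elim=> [|q IH] nu; rewrite ?mulSn => le_nu.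
  by exists 0; rewrite expr0; apply: stochastic_col_band; apply: stochasticX.
have [le_k le_rest] : (k <= nu)%N /\ (q * k <= nu - k)%N by lia.
have [a Ba] := IH (nu - k)%N le_rest.
have [a' Ba'] := col_bandM l0 (stochasticX k sP) d0 Pd Ba.
by exists a'; rewrite exprS -(subnKC le_k) exprD.
Qed.

Lemma col_band_dist B j a w : (0 < N)%N -> \sum_i B i j = 1 ->
  col_band B j a w -> forall i, `|N%:R^-1 - B i j| <= w.
Proof.
move=> N0 Bj1 Bj i.
have N0' : 0 < N%:R :> R by rewrite ltr0n.
have sum_const c : \sum_(l < N) c = c * N%:R by rewrite sumr_const card_ord mulr_natr.
have lo : a <= N%:R^-1.
  rewrite -div1r ler_pdivlMr // -sum_const -Bj1.
  by apply: ler_sum => l _; case/andP: (Bj l).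
have hi : N%:R^-1 <= a + w.
  rewrite -div1r ler_pdivrMr // -sum_const -Bj1.
  by apply: ler_sum => l _; case/andP: (Bj l).
have /andP[Bi_lo Bi_hi] := Bj i.
rewrite ler_norml; apply/andP; split; lra.
Qed.

End stochastic_matrix.

Lemma trmxX (K : comPzRingType) n (A : 'M[K]_n) k : (A ^+ k)^T = A^T ^+ k.
Proof.
elim: k => [|k IH]; first by rewrite !expr0 trmx1.
by rewrite exprS exprSr -!mulmxE trmx_mul IH.
Qed.

Lemma mx_norm_entry_le (K : realDomainType) m n (M : 'M[K]_(m, n)) i j :
  `|M i j| <= `|M|.
Proof.
rewrite /Num.norm /= mx_normrE.
exact: (le_bigmax _ (fun ij : 'I_m * 'I_n => `|M ij.1 ij.2|) (i, j)).
Qed.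

Section doubly_stochastic_power.
Variables (R : realType) (N : nat).
Implicit Type T : 'M[R]_N.

Lemma doubly_stochasticE T :
  doubly_stochastic T <-> stochastic T /\ stochastic T^T.
Proof.
split=> [[T0 [T1 T1']]|[[T0 T1] [_ T1']]].
  split=> //; split=> [i j|j]; first by rewrite mxE.
  by rewrite -(T1' j); apply: eq_bigr => i _; rewrite mxE.
split=> //; split=> // j.
by rewrite -(T1' j); apply: eq_bigr => i _; rewrite mxE.
Qed.

Lemma doubly_stochasticX T k :
  doubly_stochastic T -> doubly_stochastic (T ^+ k).
Proof. by rewrite !doubly_stochasticE trmxX => -[sT sTt]; split; apply: stochasticX. Qed.

Lemma doubly_stochasticX_entry_itv T k i j :
  doubly_stochastic T -> 0 <= (T ^+ k) i j <= 1.
Proof.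
move=> /(doubly_stochasticX k)/doubly_stochasticE[sTk _].
by rewrite sTk.1 stochastic_le1.
Qed.

Lemma dist_Jmat_entry_le (A : 'M[R]_N) i j :
  `|N%:R^-1 - A i j| <= `|Jmat R N - A|.
Proof. by have := mx_norm_entry_le (Jmat R N - A) i j; rewrite !mxE mulr1. Qed.

Lemma primitive_entry_lb T : primitive T ->
  exists k d, 0 < d /\ forall i j, d <= (T ^+ k) i j.
Proof.
case=> k Tk; exists k, (\big[Order.min/1]_(p : 'I_N * 'I_N) (T ^+ k) p.1 p.2).
split=> [|i j]; first by apply: lt_bigmin => // p _; exact: Tk.
exact: (bigmin_le 1 (i, j) (fun p : 'I_N * 'I_N => (T ^+ k) p.1 p.2)).
Qed.

Theorem cvg_pow_doubly_stochastic T : (0 < N)%N ->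
  doubly_stochastic T -> primitive T -> T ^+ nu @[nu --> \oo] --> Jmat R N.
Proof.
move=> N0 dsT /primitive_entry_lb [k [d [d0 Tkd]]].
have [sT _] := proj1 (doubly_stochasticE T) dsT.
pose l0 := Ordinal N0.
have d1 : d <= 1 by apply: le_trans (Tkd l0 l0) (stochastic_le1 _ _ (stochasticX k sT)).
have geo : (1 - d) ^+ q @[q --> \oo] --> 0.
  by apply: cvg_expr; rewrite ger0_norm ?subr_ge0 // ltrBlDr ltrDl.
apply/cvgrPdist_le => e e0.
have /cvgrPdist_le/(_ e e0) [q _ /(_ q (leqnn q))] := geo.
rewrite /= sub0r normrN ger0_norm ?exprn_ge0 ?subr_ge0 // => qe.
exists (q * k)%N => // nu /= le_nu.
rewrite /Num.norm /= mx_normrE; apply/bigmax_leP.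
split=> [|[i j] _ /=]; first exact: ltW.
have [a Ba] := col_band_pow j l0 sT (ltW d0) Tkd le_nu.
have [_ [_ colsum]] := doubly_stochasticX nu dsT.
rewrite !mxE mulr1; exact: le_trans (col_band_dist N0 (colsum j) Ba i) qe.
Qed.

End doubly_stochastic_power.

Lemma mx_norm_tensmx_le (K : realDomainType) m n p q
    (M : 'M[K]_(m, n)) (A : 'M[K]_(p, q)) :
  `|tensmx M A| <= `|M| * `|A|.
Proof.
rewrite [X in X <= _]/Num.norm /= mx_normrE; apply/bigmax_leP.
split=> [|[i j] _ /=]; first by rewrite mulr_ge0.
rewrite /tensmx !mxE normrM.
by apply: ler_pM; rewrite ?normr_ge0 ?mx_norm_entry_le.
Qed.

Lemma tensmxBl (K : pzRingType) m n p q (M M' : 'M[K]_(m, n)) (A : 'M[K]_(p, q)) :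
  tensmx (M - M') A = tensmx M A - tensmx M' A.
Proof. by apply/matrixP => i j; rewrite /tensmx !mxE mulrBl. Qed.

Lemma cvg_tensmxl (R : realType) m n p q {T} (F : set_system T) {FF : Filter F}
    (M : T -> 'M[R]_(m, n)) (M0 : 'M[R]_(m, n)) (A : 'M[R]_(p, q)) :
  M t @[t --> F] --> M0 -> tensmx (M t) A @[t --> F] --> tensmx M0 A.
Proof.
move=> /cvgrPdist_le MM0; apply/cvgrPdist_le => e e0.
have A1 : 0 < `|A| + 1 by rewrite ltr_pwDr.
apply: filterS (MM0 _ (divr_gt0 e0 A1)) => t le_t.
rewrite -tensmxBl; apply: le_trans (mx_norm_tensmx_le _ _) _.
apply: le_trans (ler_wpM2r (normr_ge0 A) le_t) _.
by rewrite mulrAC ler_pdivrMr // mulrDr mulr1 lerDl ltW.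
Qed.

Section compact_normed.
Variables (R : realType) (V W : normedModType R).

Lemma compact_norm_le (A : set V) : compact A ->
  exists2 M, 0 <= M & forall x, A x -> `|x| <= M.
Proof.
move=> /compact_bounded [M [_ AM]]; exists (`|M| + 1); first by rewrite addr_ge0.
by apply: AM; rewrite (le_lt_trans (ler_norm M)) // ltrDl.
Qed.

Lemma within_continuous_ball (K : set V) (g : V -> W) x e :
  {within K, continuous g} -> K x -> 0 < e ->
  exists2 d, 0 < d & forall y, K y -> `|x - y| < d -> `|g x - g y| < e.
Proof.
move=> cg Kx e0.
have := (subspace_continuousP _ _).1 cg x Kx => /cvgrPdist_lt/(_ e e0).
rewrite near_withinE => /nbhs_ballP [d d0 xd].
by exists d => // y Ky xy; apply: xd => //; rewrite -ball_normE.
Qed.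

(* Heine--Cantor, through the near-covering characterisation of compactness. *)
Lemma compact_unif_continuous (K : set V) (g : V -> W) e :
  compact K -> {within K, continuous g} -> 0 < e ->
  exists2 d, 0 < d & forall p q, K p -> K q -> `|p - q| < d -> `|g p - g q| < e.
Proof.
move=> cK cg e0.
pose close d p := forall q, K q -> `|p - q| < d -> `|g p - g q| < e.
have local x : K x -> \forall p \near x & d \near 0^'+, K p -> close d p.
  move=> Kx; have [d d0 xd] := within_continuous_ball cg Kx (divr_gt0 e0 (ltr0n R 2)).
  exists (ball x (d / 2), [set r | r < d / 2]) => /=.
    by split; [apply: nbhsx_ballx | apply: nbhs_right_lt]; rewrite divr_gt0.
  move=> [p r] /= [xp rd] Kp q Kq pq; rewrite -ball_normE /= in xp.
  have xq : `|x - q| < d.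
    rewrite -(subrK p x) -addrA (splitr d).
    by rewrite (le_lt_trans (ler_normD _ _)) // ltrD // (lt_trans pq).
  rewrite -(subrK (g x) (g p)) -addrA (splitr e) (le_lt_trans (ler_normD _ _)) //.
  by rewrite ltrD // ?xd // distrC xd // (lt_trans xp) // ltr_pdivrMr // ltr_pMr // ltr1n.
have /near_covering_withinP cov := (compact_near_coveringP K).1 cK.
have Kclose := cov R (0:R)^'+ close _ local.
have [d [d0 Kd]] : exists d, 0 < d /\ K `<=` close d.
  by near (0:R)^'+ => d; exists d; split; [|near: d; exact: Kclose].
by exists d => // p q /Kd; apply.
Unshelve. all: by end_near.
Qed.

End compact_normed.

Section mixtures.
Variables (R : realType) (N n : nat) (X : 'I_N -> set 'rV[R]_n).
Local Notation PX := (prod_topology (fun _ : 'I_N => 'rV[R]_n)).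
Local Notation PW := (prod_topology (fun _ : 'I_N => R)).

Definition simplex : set PW :=
  [set w | forall j, `[0, 1]%classic (w j)] `&` [set w | \sum_j w j = 1].

Definition mixture (i : 'I_N) (p : PX * PW) : 'rV[R]_n * 'rV[R]_n :=
  (p.1 i, \sum_j p.2 j *: p.1 j).

(* Contains every argument (x^i, σ^i_ν(x)) and (x^i, σ_∞(x)) of the partial
   gradients; the product topologies make Tychonoff's theorem available. *)
Definition mixtures i := mixture i @` ([set x : PX | inX X x] `*` simplex).

Lemma compact_simplex : compact simplex.
Proof.
apply: compact_closedI.
  exact: (tychonoff (fun _ => @segment_compact R 0 1)).
have sum_cont : continuous (fun w : PW => \sum_j w j).
  by apply: continuous_big => [|j _]; [exact: add_continuous | exact: proj_continuous].
change (closed ((fun w : PW => \sum_j w j) @^-1` [set x : R | x = 1])).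
by apply: preimage_closed; [move=> w _; exact: sum_cont | exact: closed_eq].
Qed.

Lemma continuous_mixture i : continuous (mixture i).
Proof.
have fst_cont j : continuous (fun p : PX * PW => p.1 j).
  move=> p; apply: (@cvg_comp _ _ _ fst (fun x : PX => x j)); first exact: cvg_fst.
  exact: (@proj_continuous _ (fun=> 'rV[R]_n) j).
have snd_cont j : continuous (fun p : PX * PW => p.2 j).
  move=> p; apply: (@cvg_comp _ _ _ snd (fun w : PW => w j)); first exact: cvg_snd.
  exact: (@proj_continuous _ (fun=> R) j).
have sum_cont : continuous (fun q : PX * PW => \sum_j q.2 j *: q.1 j).
  apply: continuous_big => [|j _ q]; first exact: add_continuous.
  exact: continuousZ (snd_cont j q) (fst_cont j q).
by move=> p; have := cvg_pair (fst_cont i p) (sum_cont p); exact.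
Qed.

Lemma compact_mixtures i : (forall j, compact (X j)) -> compact (mixtures i).
Proof.
move=> cX; apply: continuous_compact.
  exact/continuous_subspaceT/continuous_mixture.
exact: compact_setX (tychonoff cX) compact_simplex.
Qed.

Lemma mixtures_sub i : mixtures i `<=` [set p | X i p.1 /\ convU X p.2].
Proof.
move=> _ [[x w] [/= Xx [/= w01 w1]] <-]; split; first exact: Xx.
exists N, w, x; split => // [j|j]; last by exists j.
by have := w01 j; rewrite /= in_itv /= => /andP[].
Qed.

Lemma mem_mixtures i (w : 'I_N -> R) x : inX X x ->
  (forall j, 0 <= w j) -> \sum_j w j = 1 -> mixtures i (x i, \sum_j w j *: x j).
Proof.
move=> Xx w0 w1; exists ((x : PX), (w : PW)) => //; split=> //; split=> //= j.
by rewrite in_itv /= w0 -w1 ler_sum_term.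
Qed.

End mixtures.

Section gradient_operator.
Variables (R : realType) (N n : nat) (X : 'I_N -> set 'rV[R]_n).
Variables (J : 'I_N -> 'rV[R]_n -> 'rV[R]_n -> R) (T : 'M[R]_N) (i : 'I_N).
Hypotheses (cX : forall j, compact (X j))
  (hJ : C1_on (J i) [set p | X i p.1 /\ convU X p.2])
  (dsT : doubly_stochastic T).
Local Notation g1 := (fun q : 'rV[R]_n * 'rV[R]_n => grad1 (J i) q.1 q.2).
Local Notation g2 := (fun q : 'rV[R]_n * 'rV[R]_n => grad2 (J i) q.1 q.2).

Lemma within_continuous_grad :
  {within mixtures X i, continuous g1} /\ {within mixtures X i, continuous g2}.
Proof.
have sub := @mixtures_sub _ _ _ X i.
by split; apply: continuous_subspaceW sub _; [exact: hJ.2.1 | exact: hJ.2.2].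
Qed.

Lemma grad_bounded : exists2 B, 0 <= B &
  forall q, mixtures X i q -> `|g1 q| <= B /\ `|g2 q| <= B.
Proof.
have cC : compact (mixtures X i) := compact_mixtures cX.
have [c1 c2] := within_continuous_grad.
have [B1 B10 B1g] := compact_norm_le (continuous_compact c1 cC).
have [B2 B20 B2g] := compact_norm_le (continuous_compact c2 cC).
exists (B1 + B2) => [|q Cq]; first exact: addr_ge0.
have := B1g _ (imageP _ Cq); have := B2g _ (imageP _ Cq).
by move=> /= g2B g1B; split; lra.
Qed.

Lemma sum_norm_bounded : exists2 B, 0 <= B &
  forall x, inX X x -> \sum_j `|x j| <= B.
Proof.
have /choice [M XM] : forall j, exists M, 0 <= M /\ forall y, X j y -> `|y| <= M.
  by move=> j; have [M M0 XM] := compact_norm_le (@cX j); exists M.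
exists (\sum_j M j) => [|x Xx]; first by apply: sumr_ge0 => j _; exact: (XM j).1.
by apply: ler_sum => j _; apply: (XM j).2.
Qed.

Lemma mixtures_sigma_nu nu x : inX X x -> mixtures X i (x i, sigma_nu T nu i x).
Proof.
have /(doubly_stochasticX nu)/doubly_stochasticE[[T0 T1] _] := dsT.
by move=> Xx; apply: mem_mixtures.
Qed.

Lemma mixtures_sigma_inf x : inX X x -> mixtures X i (x i, sigma_inf x).
Proof.
have N0 : 0 < N%:R :> R by rewrite ltr0n (leq_ltn_trans _ (ltn_ord i)).
move=> Xx; rewrite /sigma_inf scaler_sumr; apply: mem_mixtures => //.
by rewrite sumr_const card_ord -[LHS]mulr_natr mulVf ?gt_eqF.
Qed.

Lemma F_nu_bounded : exists M, forall nu x, inX X x -> `|F_nu J T nu x i| <= M.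
Proof.
have [B B0 gB] := grad_bounded.
exists (B + B) => nu x Xx; have /gB[g1B g2B] := mixtures_sigma_nu nu Xx.
have /andP[t0 t1] := doubly_stochasticX_entry_itv nu i i dsT.
rewrite (le_trans (ler_normD _ _)) // lerD // normrZ ger0_norm // -[B]mul1r.
exact: ler_pM.
Qed.

Lemma sigma_inf_sub_nu_le nu (x : 'I_N -> 'rV[R]_n) :
  `|sigma_inf x - sigma_nu T nu i x| <= `|Jmat R N - T ^+ nu| * \sum_j `|x j|.
Proof.
rewrite /sigma_inf /sigma_nu scaler_sumr -sumrB mulr_sumr.
apply: le_trans (ler_norm_sum _ _ _) _; apply: ler_sum => j _.
by rewrite -scalerBl normrZ ler_wpM2r // dist_Jmat_entry_le.
Qed.

Lemma F_nu_subE nu (x : 'I_N -> 'rV[R]_n) :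
  let p := (x i, sigma_nu T nu i x) in let p' := (x i, sigma_inf x) in
  let t := (T ^+ nu) i i in
  F_nu J T nu x i - F_inf J x i =
    (g1 p - g1 p') + t *: (g2 p - g2 p') + (t - N%:R^-1) *: g2 p'.
Proof. by apply/rowP => k; rewrite /F_nu /F_inf !mxE; ring. Qed.

Lemma F_nu_unif_cvg e : T ^+ nu @[nu --> \oo] --> Jmat R N -> 0 < e ->
  \forall nu \near \oo, forall x, inX X x -> `|F_nu J T nu x i - F_inf J x i| < e.
Proof.
move=> /cvgrPdist_lt TJ e0.
have e3 : 0 < e / 3 by rewrite divr_gt0.
have cC : compact (mixtures X i) := compact_mixtures cX.
have [c1 c2] := within_continuous_grad.
have [d1 d10 uc1] := compact_unif_continuous cC c1 e3.
have [d2 d20 uc2] := compact_unif_continuous cC c2 e3.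
have [B B0 gB] := grad_bounded.
have [Bx Bx0 xB] := sum_norm_bounded.
pose c := Order.min (Order.min d1 d2) (e / 3).
have c0 : 0 < c by rewrite !lt_min d10 d20 e3.
have K0 : 0 < Bx + B + 1 by rewrite ltr_pwDr // addr_ge0.
apply: filterS (TJ _ (divr_gt0 c0 K0)) => nu /=; rewrite ltr_pdivlMr // => DK x Xx.
set D := `|Jmat R N - T ^+ nu| in DK.
have [D0 cd1 cd2 ce] : [/\ 0 <= D, c <= d1, c <= d2 & c <= e / 3].
  by rewrite normr_ge0 !ge_min !lexx !orbT.
have DBx : D * Bx < c by apply: le_lt_trans DK; rewrite ler_wpM2l //; lra.
have DB : D * B < c by apply: le_lt_trans DK; rewrite ler_wpM2l //; lra.
have Mnu : mixtures X i (x i, sigma_nu T nu i x) by exact: mixtures_sigma_nu.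
have Minf : mixtures X i (x i, sigma_inf x) by exact: mixtures_sigma_inf.
have close : `|(x i, sigma_inf x) - (x i, sigma_nu T nu i x)| < c.
  rewrite prod_normE /= subrr normr0 max_r ?normr_ge0 //.
  apply: le_lt_trans (sigma_inf_sub_nu_le nu x) (le_lt_trans _ DBx).
  by rewrite ler_wpM2l // xB.
have a1 := uc1 _ _ Minf Mnu (lt_le_trans close cd1).
have a2 := uc2 _ _ Minf Mnu (lt_le_trans close cd2).
have /andP[t0 t1] := doubly_stochasticX_entry_itv nu i i dsT.
have tD : `|(T ^+ nu) i i - N%:R^-1| <= D by rewrite distrC dist_Jmat_entry_le.
have a3 : `|(T ^+ nu) i i - N%:R^-1| * `|g2 (x i, sigma_inf x)| < e / 3.
  by apply: le_lt_trans (ler_pM _ _ tD (proj2 (gB _ Minf))) (lt_le_trans DB ce).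
have a2' : `|(T ^+ nu) i i| *
    `|g2 (x i, sigma_nu T nu i x) - g2 (x i, sigma_inf x)| < e / 3.
  rewrite ger0_norm // distrC.
  by apply: le_lt_trans a2; rewrite ler_piMl.
rewrite F_nu_subE (le_lt_trans (ler_normD _ _)) // !normrZ.
apply: le_lt_trans (lerD (ler_normD _ _) (lexx _)) _; rewrite normrZ distrC.
move: a1 a2' a3 => /=; lra.
Qed.

End gradient_operator.

Unset Implicit Arguments.

Theorem lemma1 (R : realType) (N n m : nat) (hN : (0 < N)%N) (hn : (0 < n)%N)
  (hm : (0 < m)%N)
  (X : 'I_N -> set 'rV[R]_n)
  (hXconv : forall i, convex_set (X i : set (convex_lmodType 'rV[R]_n)))
  (hXcpt : forall i, compact (X i))
  (hXint : forall i, (interior (X i)) !=set0)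
  (J : 'I_N -> 'rV[R]_n -> 'rV[R]_n -> R)
  (hJC1 : forall i, C1_on (J i) [set p | X i p.1 /\ convU X p.2])
  (hJcvx : forall i (x : 'I_N -> 'rV[R]_n), inX X x ->
     convex_function (X i : set (convex_lmodType 'rV[R]_n))
       (fun w : convex_lmodType 'rV[R]_n => J i w (sigma_inf (upd x i w))))
  (Ahat : 'M[R]_(m, n)) (T : 'M[R]_N)
  (hT01 : forall i j, 0 <= T i j <= 1)
  (hTprim : primitive T) (hTds : doubly_stochastic T) :
  [/\ (fun nu => T ^+ nu) @ \oo --> Jmat R N,
      (fun nu => A_nu T Ahat nu) @ \oo --> A_inf N Ahat,
      (forall e : R, 0 < e -> exists K : nat, forall nu : nat, (K <= nu)%N ->
         forall x, inX X x -> forall i, `|F_nu J T nu x i - F_inf J x i| < e)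
    & exists M : R, forall nu : nat, forall x, inX X x -> forall i,
         `|F_nu J T nu x i| <= M].
Proof.
have TJ := cvg_pow_doubly_stochastic hN hTds hTprim.
split=> //; first exact: cvg_tensmxl.
  move=> e e0.
  have /filter_forall : forall i, \forall nu \near \oo,
      forall x, inX X x -> `|F_nu J T nu x i - F_inf J x i| < e.
    by move=> i; apply: (F_nu_unif_cvg hXcpt (hJC1 i) hTds TJ e0).
  by case=> K _ FK; exists K => nu le_nu x Xx i; apply: FK.
have /choice [M FM] : forall i, exists M, forall nu x, inX X x -> `|F_nu J T nu x i| <= M.
  by move=> i; apply: (F_nu_bounded hXcpt (hJC1 i) hTds).
exists (\sum_i `|M i|) => nu x Xx i.
by rewrite (le_trans (FM i nu x Xx)) // (le_trans (ler_norm _)) // ler_sum_term.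
Qed.
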